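(* For $n\ge1$ and real $\theta$ with $1\le\theta\le n/2$, let $\mathcal V=\mathrm{span}\{|+\rangle^{\otimes n}\}$. Then $$\big\|\Pi_{\mathcal V^\perp}H^\theta_1|+\rangle^{\otimes n}\big\|^2=\langle+^{n}|(H^\theta_1)^2|+^{n}\rangle-\langle+^{n}|H^\theta_1|+^{n}\rangle^2\le2\theta^2e^{-(n/2-\theta)^2/n}.$$
   Context: On $n$ qubits with computational basis $|j\rangle$, $j\in\{0,\dots,2^n-1\}$: $h(j)$ is the Hamming weight of $j$, $h_\theta(j)=\min(\theta,h(j))$, and $H^\theta_1=\sum_j h_\theta(j)|j\rangle\langle j|$. $|+^n\rangle=|+\rangle^{\otimes n}$. *)

From Stdlib Require Import Reals Lra Lia.
Open Scope R_scope.

(* Hamming weight of the n-bit string j: sum of the n low-order bits of j.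
   For j < 2^n this is exactly the Hamming weight h(j). *)
Fixpoint hw (n j : nat) : nat :=
  match n with
  | O => O
  | S k => (Nat.modulo j 2 + hw k (Nat.div j 2))%nat
  end.

Fixpoint rsum (N : nat) (f : nat -> R) : R :=
  match N with
  | O => 0
  | S k => rsum k f + f k
  end.

(* state vectors on n qubits: amplitudes indexed by j in {0,...,2^n-1}
   (all vectors involved have real amplitudes) *)
Definition inner (n : nat) (u v : nat -> R) : R :=
  rsum (2 ^ n) (fun j => u j * v j).

Definition norm2 (n : nat) (v : nat -> R) : R := inner n v v.

Definition h_theta (theta : R) (n j : nat) : R := Rmin theta (INR (hw n j)).

(* H^theta_1 = sum_j h_theta(j) |j><j|, acting on a vector *)
Definition H1 (theta : R) (n : nat) (v : nat -> R) : nat -> R :=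
  fun j => h_theta theta n j * v j.

Definition plus_state (n : nat) : nat -> R := fun _ => / sqrt (2 ^ n).

Definition proj_perp (n : nat) (psi v : nat -> R) : nat -> R :=
  fun j => v j - (inner n psi v / inner n psi psi) * psi j.

(** Write [psi = |+^n>] and [h = h_theta].  Since [psi] is a unit vector, the
    squared norm of the component of [H psi] orthogonal to [psi] is
    [|H psi|^2 - <psi, H psi>^2], the variance of [h] under the uniform
    distribution on bit strings.  The variance is at most the mean of
    [(h - theta)^2], and a Chernoff-type estimate bounds this: pointwise
    [(min(theta, k) - theta)^2 <= theta^2 exp (lambda (theta - k))] for
    [lambda >= 0], and the mean of [exp (- lambda hw)] factorizes as
    [((1 + exp (- lambda)) / 2)^n].  Choosing [lambda = 2x] with
    [x = (n/2 - theta) / n] and using [cosh x <= exp (x^2)] on [[0, 1/2]]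
    gives [theta^2 exp (- (n/2 - theta)^2 / n)]. *)

From Stdlib Require Import Reals Lra Lia.
Open Scope R_scope.

Lemma rsum_ext N f g :
  (forall j, (j < N)%nat -> f j = g j) -> rsum N f = rsum N g.
Proof.
  induction N as [|N IH]; intros Hfg; cbn [rsum]; [reflexivity|].
  rewrite IH, (Hfg N) by (lia || (intros; apply Hfg; lia)); reflexivity.
Qed.

Lemma rsum_add N f g : rsum N (fun j => f j + g j) = rsum N f + rsum N g.
Proof. induction N as [|N IH]; cbn [rsum]; [lra|]. rewrite IH; lra. Qed.

Lemma rsum_scal N a f : rsum N (fun j => a * f j) = a * rsum N f.
Proof. induction N as [|N IH]; cbn [rsum]; [lra|]. rewrite IH; lra. Qed.

Lemma rsum_const N a : rsum N (fun _ => a) = INR N * a.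
Proof. induction N as [|N IH]; cbn [rsum]; [simpl; lra|]. rewrite IH, S_INR; lra. Qed.

Lemma rsum_le N f g :
  (forall j, (j < N)%nat -> f j <= g j) -> rsum N f <= rsum N g.
Proof.
  induction N as [|N IH]; intros Hfg; cbn [rsum]; [lra|].
  apply Rplus_le_compat; [apply IH; intros; apply Hfg; lia | apply Hfg; lia].
Qed.

Lemma rsum_double N f :
  rsum (2 * N) f = rsum N (fun k => f (2 * k)%nat + f (2 * k + 1)%nat).
Proof.
  induction N as [|N IH]; [simpl; lra|].
  replace (2 * S N)%nat with (S (S (2 * N))) by lia.
  cbn [rsum]. rewrite IH. replace (2 * N + 1)%nat with (S (2 * N)) by lia. lra.
Qed.

Lemma hw_double n k : hw (S n) (2 * k) = hw n k.
Proof.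
  cbn [hw]. rewrite Nat.mul_comm, Nat.Div0.mod_mul, Nat.div_mul by lia. lia.
Qed.

Lemma hw_double_succ n k : hw (S n) (2 * k + 1) = S (hw n k).
Proof.
  cbn [hw].
  rewrite (Nat.add_comm (2 * k)), (Nat.mul_comm 2), Nat.Div0.mod_add, Nat.div_add
    by lia.
  simpl. lia.
Qed.

Lemma rsum_exp_hw n l :
  rsum (2 ^ n) (fun j => exp (- l * INR (hw n j))) = (1 + exp (- l)) ^ n.
Proof.
  induction n as [|n IH].
  - simpl. rewrite Rmult_0_r, exp_0. lra.
  - replace (2 ^ S n)%nat with (2 * 2 ^ n)%nat by (simpl; lia).
    rewrite rsum_double. cbn [pow]. rewrite <- IH, <- rsum_scal.
    apply rsum_ext. intros j _.
    rewrite hw_double, hw_double_succ, S_INR, Rmult_plus_distr_l, Rmult_1_r, exp_plus.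
    ring.
Qed.

Lemma norm2_sub_scal n v a psi :
  norm2 n (fun j => v j - a * psi j)
  = norm2 n v - 2 * a * inner n psi v + a ^ 2 * norm2 n psi.
Proof.
  unfold norm2, inner.
  transitivity (rsum (2 ^ n) (fun j => v j * v j
    + ((- 2 * a) * (psi j * v j) + a ^ 2 * (psi j * psi j)))).
  - apply rsum_ext. intros. ring.
  - rewrite !rsum_add, !rsum_scal. ring.
Qed.

Lemma norm2_proj_perp n psi v :
  norm2 n psi = 1 -> norm2 n (proj_perp n psi v) = norm2 n v - inner n psi v ^ 2.
Proof.
  intros Hpsi. unfold proj_perp. fold (norm2 n psi). rewrite Hpsi, Rdiv_1_r.
  rewrite norm2_sub_scal, Hpsi. ring.
Qed.

Lemma inner_H1 theta n u v : inner n u (H1 theta n v) = inner n (H1 theta n u) v.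
Proof. apply rsum_ext. intros. unfold H1. ring. Qed.

Definition avg (N : nat) (f : nat -> R) : R := rsum N f / INR N.

Lemma avg_ext N f g :
  (forall j, (j < N)%nat -> f j = g j) -> avg N f = avg N g.
Proof. intros Hfg. unfold avg. now rewrite (rsum_ext N f g Hfg). Qed.

Lemma avg_scal N a f : avg N (fun j => a * f j) = a * avg N f.
Proof. unfold avg. rewrite rsum_scal. unfold Rdiv. ring. Qed.

Lemma avg_le N f g :
  (forall j, (j < N)%nat -> f j <= g j) -> avg N f <= avg N g.
Proof.
  intros Hfg. unfold avg, Rdiv. apply Rmult_le_compat_r.
  - destruct N as [|N]; [simpl; rewrite Rinv_0; lra|].
    apply Rlt_le, Rinv_0_lt_compat, lt_0_INR. lia.
  - now apply rsum_le.
Qed.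

Lemma avg_const N a : (0 < N)%nat -> avg N (fun _ => a) = a.
Proof.
  intros HN. unfold avg. rewrite rsum_const. field.
  apply not_0_INR. lia.
Qed.

Lemma avg_sq_sub_avg_sq_le N f a : (0 < N)%nat ->
  avg N (fun j => f j ^ 2) - avg N f ^ 2 <= avg N (fun j => (f j - a) ^ 2).
Proof.
  intros HN.
  assert (Hexp : avg N (fun j => (f j - a) ^ 2)
                 = avg N (fun j => f j ^ 2) - 2 * a * avg N f + a ^ 2).
  { unfold avg.
    transitivity (rsum N (fun j => f j ^ 2 + (- 2 * a * f j + a ^ 2)) / INR N).
    - f_equal. apply rsum_ext. intros. ring.
    - rewrite !rsum_add, rsum_scal, rsum_const. field. apply not_0_INR. lia. }
  rewrite Hexp. pose proof (pow2_ge_0 (avg N f - a)). lra.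
Qed.

Lemma avg_exp_hw n l :
  avg (2 ^ n) (fun j => exp (- l * INR (hw n j))) = ((1 + exp (- l)) / 2) ^ n.
Proof.
  unfold avg, Rdiv. rewrite rsum_exp_hw, pow_INR, Rpow_mult_distr, pow_inv.
  reflexivity.
Qed.

Lemma plus_state_mul n j : plus_state n j * plus_state n j = / INR (2 ^ n).
Proof.
  unfold plus_state. rewrite <- Rinv_mult, sqrt_sqrt, pow_INR; [reflexivity|].
  apply pow_le. lra.
Qed.

Lemma inner_plus_state n f g :
  inner n (fun j => f j * plus_state n j) (fun j => g j * plus_state n j)
  = avg (2 ^ n) (fun j => f j * g j).
Proof.
  unfold inner, avg, Rdiv. rewrite Rmult_comm, <- rsum_scal.
  apply rsum_ext. intros j _. rewrite <- (plus_state_mul n j). ring.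
Qed.

Lemma norm2_plus_state n : norm2 n (plus_state n) = 1.
Proof.
  transitivity (inner n (fun j => 1 * plus_state n j) (fun j => 1 * plus_state n j)).
  - apply rsum_ext. intros. ring.
  - rewrite inner_plus_state, avg_const; [ring|].
    apply Nat.neq_0_lt_0, Nat.pow_nonzero. lia.
Qed.

Lemma inner_plus_state_H1 theta n :
  inner n (plus_state n) (H1 theta n (plus_state n)) = avg (2 ^ n) (h_theta theta n).
Proof.
  transitivity (inner n (fun j => 1 * plus_state n j) (H1 theta n (plus_state n))).
  - apply rsum_ext. intros. ring.
  - unfold H1. rewrite inner_plus_state. apply avg_ext. intros. ring.
Qed.

Lemma norm2_H1_plus_state theta n :
  norm2 n (H1 theta n (plus_state n)) = avg (2 ^ n) (fun j => h_theta theta n j ^ 2).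
Proof.
  unfold norm2, H1. rewrite inner_plus_state. apply avg_ext. intros. ring.
Qed.

Lemma pow_exp a n : exp a ^ n = exp (INR n * a).
Proof.
  induction n as [|n IH]; [simpl; rewrite Rmult_0_l, exp_0; reflexivity|].
  rewrite S_INR, <- tech_pow_Rmult, IH, <- exp_plus. f_equal. ring.
Qed.

(* From [1 - x/4 <= exp (- x/4)], i.e. [exp x <= (1 - x/4)^-4]. *)
Lemma exp_le_1_add_sq x : 0 <= x <= 1/2 -> exp x <= 1 + x + x ^ 2.
Proof.
  intros Hx.
  assert (Hquarter : exp (x / 4) <= / (1 - x / 4)).
  { rewrite <- (Ropp_involutive (x / 4)), exp_Ropp.
    apply Rinv_le_contravar; [lra|]. pose proof (exp_ineq1_le (- (x / 4))). lra. }
  replace x with (INR 4 * (x / 4)) at 1 by (simpl; field).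
  rewrite <- pow_exp.
  apply Rle_trans with ((/ (1 - x / 4)) ^ 4).
  { apply pow_incr. split; [apply Rlt_le, exp_pos | exact Hquarter]. }
  rewrite pow_inv.
  assert (Hpos : 0 < (1 - x / 4) ^ 4) by (apply pow_lt; lra).
  apply (Rmult_le_reg_r ((1 - x / 4) ^ 4)); [exact Hpos|].
  rewrite Rinv_l by lra. nra.
Qed.

(* From [1 + x/2 <= exp (x/2)], i.e. [exp (-x) <= (1 + x/2)^-2]. *)
Lemma exp_neg_le_1_sub_sq x : 0 <= x -> exp (- x) <= 1 - x + x ^ 2.
Proof.
  intros Hx.
  assert (Hhalf : (1 + x / 2) ^ 2 <= exp x).
  { replace x with (INR 2 * (x / 2)) at 2 by (simpl; field).
    rewrite <- pow_exp. apply pow_incr. pose proof (exp_ineq1_le (x / 2)). lra. }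
  assert (Hpos : 0 < (1 + x / 2) ^ 2) by (apply pow_lt; lra).
  rewrite exp_Ropp.
  apply Rle_trans with (/ (1 + x / 2) ^ 2); [apply Rinv_le_contravar; lra|].
  apply (Rmult_le_reg_r ((1 + x / 2) ^ 2)); [exact Hpos|].
  rewrite Rinv_l by lra. nra.
Qed.

Lemma exp_add_exp_neg_le x : 0 <= x <= 1/2 -> exp x + exp (- x) <= 2 * exp (x ^ 2).
Proof.
  intros Hx.
  pose proof (exp_le_1_add_sq x Hx). pose proof (exp_neg_le_1_sub_sq x (proj1 Hx)).
  pose proof (exp_ineq1_le (x ^ 2)). lra.
Qed.

Lemma half_1_add_exp_neg_le x : 0 <= x <= 1/2 -> (1 + exp (- (2 * x))) / 2 <= exp (x ^ 2 - x).
Proof.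
  intros Hx.
  assert (Hfactor : 1 + exp (- (2 * x)) = exp (- x) * (exp x + exp (- x))).
  { rewrite Rmult_plus_distr_l, <- !exp_plus, Rplus_opp_l, exp_0.
    do 3 f_equal. ring. }
  rewrite Hfactor. unfold Rminus. rewrite Rplus_comm, exp_plus.
  pose proof (exp_add_exp_neg_le x Hx). pose proof (exp_pos (- x)). nra.
Qed.

Lemma sq_Rmin_sub_le l theta k : 0 <= l -> 0 <= theta -> 0 <= k ->
  (Rmin theta k - theta) ^ 2 <= theta ^ 2 * exp (l * (theta - k)).
Proof.
  intros Hl Htheta Hk. unfold Rmin. destruct (Rle_dec theta k).
  - replace ((theta - theta) ^ 2) with 0 by ring.
    pose proof (exp_pos (l * (theta - k))). pose proof (pow2_ge_0 theta). nra.
  - pose proof (exp_ineq1_le (l * (theta - k))).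
    assert (0 <= l * (theta - k)) by (apply Rmult_le_pos; lra). nra.
Qed.

Lemma avg_sq_h_theta_sub_le_exp l theta n : 0 <= l -> 0 <= theta ->
  avg (2 ^ n) (fun j => (h_theta theta n j - theta) ^ 2)
  <= theta ^ 2 * exp (l * theta) * ((1 + exp (- l)) / 2) ^ n.
Proof.
  intros Hl Htheta. rewrite <- avg_exp_hw, <- avg_scal.
  apply avg_le. intros j _.
  rewrite Rmult_assoc, <- exp_plus.
  replace (l * theta + - l * INR (hw n j)) with (l * (theta - INR (hw n j))) by ring.
  apply sq_Rmin_sub_le; [exact Hl | exact Htheta | apply pos_INR].
Qed.

Lemma avg_sq_h_theta_sub_le theta n : (1 <= n)%nat -> 0 <= theta <= INR n / 2 ->
  avg (2 ^ n) (fun j => (h_theta theta n j - theta) ^ 2)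
  <= theta ^ 2 * exp (- (INR n / 2 - theta) ^ 2 / INR n).
Proof.
  intros Hn Htheta.
  assert (Hn1 : 1 <= INR n) by (apply (le_INR 1); exact Hn).
  set (x := (INR n / 2 - theta) / INR n).
  assert (Hx : 0 <= x <= 1/2).
  { unfold x. split.
    - apply Rmult_le_pos; [lra | apply Rlt_le, Rinv_0_lt_compat; lra].
    - apply (Rmult_le_reg_r (INR n)); [lra|]. field_simplify; lra. }
  eapply Rle_trans; [apply (avg_sq_h_theta_sub_le_exp (2 * x)); lra|].
  assert (Hbase : ((1 + exp (- (2 * x))) / 2) ^ n <= exp (INR n * (x ^ 2 - x))).
  { rewrite <- pow_exp. apply pow_incr.
    pose proof (exp_pos (- (2 * x))). pose proof (half_1_add_exp_neg_le x Hx). lra. }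
  (* [x] is the minimizer of the exponent [2 x theta + n (x^2 - x)]. *)
  replace (- (INR n / 2 - theta) ^ 2 / INR n)
    with (2 * x * theta + INR n * (x ^ 2 - x)) by (unfold x; field; lra).
  rewrite exp_plus, Rmult_assoc.
  apply Rmult_le_compat_l; [apply pow2_ge_0|].
  apply Rmult_le_compat_l; [apply Rlt_le, exp_pos | exact Hbase].
Qed.

Theorem mainTheorem13 (n : nat) (theta : R) :
  (1 <= n)%nat -> 1 <= theta -> theta <= INR n / 2 ->
  norm2 n (proj_perp n (plus_state n) (H1 theta n (plus_state n)))
    = inner n (plus_state n) (H1 theta n (H1 theta n (plus_state n)))
      - (inner n (plus_state n) (H1 theta n (plus_state n))) ^ 2
  /\ inner n (plus_state n) (H1 theta n (H1 theta n (plus_state n)))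
      - (inner n (plus_state n) (H1 theta n (plus_state n))) ^ 2
     <= 2 * theta ^ 2 * exp (- (INR n / 2 - theta) ^ 2 / INR n).
Proof.
  intros Hn Htheta1 Htheta2.
  rewrite inner_H1. fold (norm2 n (H1 theta n (plus_state n))).
  split; [apply norm2_proj_perp, norm2_plus_state|].
  rewrite norm2_H1_plus_state, inner_plus_state_H1.
  eapply Rle_trans; [apply avg_sq_sub_avg_sq_le with (a := theta)|].
  { apply Nat.neq_0_lt_0, Nat.pow_nonzero. lia. }
  eapply Rle_trans; [apply avg_sq_h_theta_sub_le; [exact Hn | lra]|].
  pose proof (pow2_ge_0 theta).
  pose proof (exp_pos (- (INR n / 2 - theta) ^ 2 / INR n)). nra.
Qed.
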